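(* Let $\mathbf C$ be an admissible category of coframes. The coreflection $\mathbb P\dashv\mathrm{pt}$ between $\mathbf{Conv}$ and $(\mathbf C^{\mathrm{conv}})^{op}$ restricts to a coreflection of $\mathbf{PreTop}$ into $(\mathbf C^{\mathrm{pretop}})^{op}$, and to a coreflection of $\mathbf{PreTop}$ into $(\mathbf C^{\mathrm{pretop}}_{\mathrm{cl}})^{op}$.
   Context: A category of coframes has coframes as objects and coframe morphisms (preserving arbitrary infima and finite suprema); it is admissible if every powerset $\mathbb P(X)$ is an object and there are classes of index sets $\mathcal I,\mathcal J$ with morphisms exactly the monotone maps preserving existing $I$-indexed infima ($I\in\mathcal I$) and $J$-indexed suprema ($J\in\mathcal J$). A filter on $L$ is a non-empty upward-closed subset closed under binary meets ($L$ allowed); $\mathbb F L$ is the set of filters. A convergence $\mathbf C$-object is $(L,\lim_L)$ with $\lim_L:\mathbb F L\to L$ monotone; $\mathbf C^{\mathrm{conv}}$-morphisms are $\mathbf C$-morphisms $\varphi:L\to L'$ with $\lim_{L'}\mathcal F\le\varphi(\lim_L\varphi^{-1}(\mathcal F))$. Convergence spaces ($\mathbf{Conv}$): a set $X$ with a relation $\to$ between filters of subsets of $X$ and points with $\{S:x\in S\}\to x$ and upward monotonicity in the filter; continuous maps preserve convergence via image filters $f[\mathcal F]=\{B:f^{-1}(B)\in\mathcal F\}$. $\mathbb P(X)$ has $\lim\mathcal F=\{x:\mathcal F\to x\}$, $\mathbb P(f)=f^{-1}$. $\mathrm{pt}\,L$ is the set of $\mathbf C^{\mathrm{conv}}$-morphisms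 $L\to\{\emptyset,\{*\}\}$ (with constant limit $\{*\}$), $\ell^\bullet=\{\psi:\psi(\ell)=\{*\}\}$, $\mathcal F\to\psi$ iff $\psi\in(\lim_L\{\ell:\ell^\bullet\in\mathcal F\})^\bullet$, $\mathrm{pt}\,\varphi(\psi)=\psi\circ\varphi$. It is known that $\mathbb P\dashv\mathrm{pt}$ is an adjunction whose unit is an isomorphism (a coreflection). A pretopological space is a convergence space $X$ with $\lim_{\mathbb P(X)}\bigcap_{i}\mathcal F_i=\bigcap_i\lim_{\mathbb P(X)}\mathcal F_i$ for every family of filters; $\mathbf{PreTop}$ is the full subcategory of these. A pretopological $\mathbf C$-object is a convergence $\mathbf C$-object with $\lim_L\bigcap_{i\in I}\mathcal F_i=\bigwedge_{i\in I}\lim_L\mathcal F_i$ for every family of filters on $L$; $\mathbf C^{\mathrm{pretop}}$ is the full subcategory of these, and $\mathbf C^{\mathrm{pretop}}_{\mathrm{cl}}$ that of classical ones, where $(L,\lim_L)$ is classical if $\mathcal F\cap\mathcal C_L=\mathcal G\cap\mathcal C_L$ implies $\lim_L\mathcal F=\lim_L\mathcal G$, $\mathcal C_L$ being the set of complemented elements. *)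

From Stdlib Require Import Classical FunctionalExtensionality PropExtensionality.

Record Coframe := {
  cf :> Type;
  cle : cf -> cf -> Prop;
  cinf : (cf -> Prop) -> cf;
  csup : (cf -> Prop) -> cf;
  cle_refl : forall a, cle a a;
  cle_trans : forall a b c, cle a b -> cle b c -> cle a c;
  cle_antisym : forall a b, cle a b -> cle b a -> a = b;
  cinf_lb : forall S a, S a -> cle (cinf S) a;
  cinf_glb : forall S b, (forall a, S a -> cle b a) -> cle b (cinf S);
  csup_ub : forall S a, S a -> cle a (csup S);
  csup_lub : forall S b, (forall a, S a -> cle a b) -> cle (csup S) b;
  cdistr : forall a S,
    csup (fun y => y = a \/ y = cinf S) =
    cinf (fun y => exists s, S s /\ y = csup (fun z => z = a \/ z = s))
}.
Arguments cle {_}. Arguments cinf {_}. Arguments csup {_}.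

Definition cmeet {L : Coframe} (a b : L) : L := cinf (fun y => y = a \/ y = b).
Definition cjoin {L : Coframe} (a b : L) : L := csup (fun y => y = a \/ y = b).
Definition ctop {L : Coframe} : L := cinf (fun _ => False).
Definition cbot {L : Coframe} : L := csup (fun _ => False).
Definition finf {L : Coframe} {I : Type} (f : I -> L) : L :=
  cinf (fun y => exists i, f i = y).
Definition fsup {L : Coframe} {I : Type} (f : I -> L) : L :=
  csup (fun y => exists i, f i = y).
Definition complemented {L : Coframe} (a : L) : Prop :=
  exists b, cmeet a b = cbot /\ cjoin a b = ctop.

Section Powerset.
Variable X : Type.
Let PX := X -> Prop.
Definition ps_le (A B : PX) : Prop := forall x, A x -> B x.
Definition ps_inf (S : PX -> Prop) : PX := fun x => forall A, S A -> A x.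
Definition ps_sup (S : PX -> Prop) : PX := fun x => exists A, S A /\ A x.

Lemma ps_ext (A B : PX) : ps_le A B -> ps_le B A -> A = B.
Proof.
  intros h1 h2; apply functional_extensionality; intro x;
  apply propositional_extensionality; split; auto.
Qed.

Lemma ps_distr (a : PX) (S : PX -> Prop) :
  ps_sup (fun y => y = a \/ y = ps_inf S) =
  ps_inf (fun y => exists s, S s /\ y = ps_sup (fun z => z = a \/ z = s)).
Proof.
  apply ps_ext.
  - intros x [A [[-> | ->] HA]] B [s [Hs ->]].
    + exists a; auto.
    + exists s; split; auto. apply HA; exact Hs.
  - intros x H. destruct (classic (a x)) as [ha | ha].
    + exists a; auto.
    + exists (ps_inf S); split; [right; reflexivity|].
      intros s Hs.
      destruct (H (ps_sup (fun z => z = a \/ z = s))) as [A [[-> | ->] HA]];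
        [exists s; auto | contradiction | exact HA].
Qed.

Definition powerset : Coframe.
Proof.
  refine {| cf := PX; cle := ps_le; cinf := ps_inf; csup := ps_sup |}.
  - intros a x h; exact h.
  - intros a b c h1 h2 x h; auto.
  - exact ps_ext.
  - intros S a h x hx; exact (hx a h).
  - intros S b h x hx A hA; exact (h A hA x hx).
  - intros S a h x hx; exists a; auto.
  - intros S b h x [A [hA hx]]; exact (h A hA x hx).
  - exact ps_distr.
Defined.
End Powerset.

Definition monotone {L L' : Coframe} (phi : L -> L') : Prop :=
  forall a b, cle a b -> cle (phi a) (phi b).

Definition coframe_morphism {L L' : Coframe} (phi : L -> L') : Prop :=
  (forall S : L -> Prop, phi (cinf S) = cinf (fun y => exists x, S x /\ phi x = y))
  /\ phi cbot = cbot
  /\ (forall a b, phi (cjoin a b) = cjoin (phi a) (phi b)).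

Definition IJ_morphism (IC JC : Type -> Prop) {L L' : Coframe} (phi : L -> L') : Prop :=
  monotone phi
  /\ (forall (I : Type), IC I -> forall f : I -> L, phi (finf f) = finf (fun i => phi (f i)))
  /\ (forall (J : Type), JC J -> forall f : J -> L, phi (fsup f) = fsup (fun j => phi (f j))).

Record AdmCat := {
  ObjC : Coframe -> Prop;
  IC : Type -> Prop;
  JC : Type -> Prop;
  adm_powerset : forall X : Type, ObjC (powerset X);
  adm_coframe_mor : forall (L L' : Coframe), ObjC L -> ObjC L' ->
     forall phi : L -> L', IJ_morphism IC JC phi -> coframe_morphism phi
}.

Definition Cmor (C : AdmCat) {L L' : Coframe} (phi : L -> L') : Prop :=
  IJ_morphism (IC C) (JC C) phi.

Definition is_filter {L : Coframe} (F : L -> Prop) : Prop :=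
  (exists a, F a)
  /\ (forall a b, cle a b -> F a -> F b)
  /\ (forall a b, F a -> F b -> F (cmeet a b)).

(* lim_L is given as a function on all predicates; only its values on filters
   matter (all conditions quantify over filters). *)
Definition conv_obj (C : AdmCat) (L : Coframe) (lim : (L -> Prop) -> L) : Prop :=
  ObjC C L /\
  (forall F G : L -> Prop, is_filter F -> is_filter G ->
      (forall a, F a -> G a) -> cle (lim F) (lim G)).

Definition preimage {L L' : Coframe} (phi : L -> L') (F : L' -> Prop) : L -> Prop :=
  fun a => F (phi a).

Definition conv_mor (C : AdmCat) (L : Coframe) (limL : (L -> Prop) -> L)
   (L' : Coframe) (limL' : (L' -> Prop) -> L') (phi : L -> L') : Prop :=
  Cmor C phi /\
  forall F : L' -> Prop, is_filter F -> cle (limL' F) (phi (limL (preimage phi F))).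

Definition pretop_obj (C : AdmCat) (L : Coframe) (lim : (L -> Prop) -> L) : Prop :=
  conv_obj C L lim /\
  forall (I : Type) (Fs : I -> L -> Prop), (forall i, is_filter (Fs i)) ->
    lim (fun a => forall i, Fs i a) = finf (fun i => lim (Fs i)).

Definition classical_obj (C : AdmCat) (L : Coframe) (lim : (L -> Prop) -> L) : Prop :=
  conv_obj C L lim /\
  forall F G : L -> Prop, is_filter F -> is_filter G ->
    (forall a, complemented a -> (F a <-> G a)) -> lim F = lim G.

Definition conv_space (X : Type) (conv : ((X -> Prop) -> Prop) -> X -> Prop) : Prop :=
  (forall x, conv (fun S => S x) x) /\
  (forall (F G : (powerset X) -> Prop) x, is_filter F -> is_filter G ->
     (forall S, F S -> G S) -> conv F x -> conv G x).

Definition PX_lim (X : Type) (conv : ((X -> Prop) -> Prop) -> X -> Prop)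
  : (powerset X -> Prop) -> powerset X := fun F x => conv F x.

Definition pretop_space (X : Type) (conv : ((X -> Prop) -> Prop) -> X -> Prop) : Prop :=
  conv_space X conv /\
  forall (I : Type) (Fs : I -> (powerset X) -> Prop), (forall i, is_filter (Fs i)) ->
    PX_lim X conv (fun S => forall i, Fs i S)
    = @finf (powerset X) I (fun i => PX_lim X conv (Fs i)).

Definition two : Coframe := powerset unit.
Definition two_lim : (two -> Prop) -> two := fun _ => (fun _ : unit => True).

Definition pt_carrier (C : AdmCat) (L : Coframe) (lim : (L -> Prop) -> L) : Type :=
  { psi : L -> two | conv_mor C L lim two two_lim psi }.

Definition bullet (C : AdmCat) (L : Coframe) (lim : (L -> Prop) -> L) (l : L)
  : pt_carrier C L lim -> Prop :=
  fun psi => proj1_sig psi l = (fun _ : unit => True).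

Definition pt_conv (C : AdmCat) (L : Coframe) (lim : (L -> Prop) -> L)
  : ((pt_carrier C L lim -> Prop) -> Prop) -> pt_carrier C L lim -> Prop :=
  fun F psi => bullet C L lim (lim (fun l => F (bullet C L lim l))) psi.

(* Points of L are C-morphisms into 2 = P(1) between objects of C, hence
   coframe morphisms; so l |-> l^bullet preserves infima, and pulling a filter
   on pt L back along it gives a filter on L.  The pretopological law
   lim_L (/\ F_i) = /\ lim_L F_i therefore transports along l |-> l^bullet to
   pt L.  Conversely P(X) is pretopological exactly when X is, and it is
   classical because every element of a powerset is complemented. *)
From Stdlib Require Import Classical FunctionalExtensionality PropExtensionality.

Lemma two_eq_top (A : two) : A = (fun _ => True) <-> A tt.
Proof.
  split.
  - intros ->; exact I.
  - intro hA; apply functional_extensionality; intros [].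
    apply propositional_extensionality; split; auto.
Qed.

Lemma powerset_finfE (X I : Type) (f : I -> powerset X) (x : X) :
  @finf (powerset X) I f x <-> forall i, f i x.
Proof.
  split.
  - intros hx i; apply hx; exists i; reflexivity.
  - intros hx A [i <-]; apply hx.
Qed.

Lemma powerset_complemented (X : Type) (A : powerset X) : complemented A.
Proof.
  exists (fun x => ~ A x); split; apply ps_ext.
  - intros x hx; exfalso.
    apply (hx (fun x => ~ A x)); [right; reflexivity|].
    apply (hx A); left; reflexivity.
  - intros x [B [[] _]].
  - intros x _ B [].
  - intros x _; destruct (classic (A x)).
    + exists A; auto.
    + exists (fun x => ~ A x); auto.
Qed.

Lemma classical_obj_of_complemented (C : AdmCat) (L : Coframe)
    (lim : (L -> Prop) -> L) :
  (forall a : L, complemented a) -> conv_obj C L lim -> classical_obj C L lim.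
Proof.
  intros hcompl hconv; split; [exact hconv|].
  intros F G _ _ hFG.
  replace G with F; [reflexivity|].
  apply functional_extensionality; intro a.
  apply propositional_extensionality, hFG, hcompl.
Qed.

Lemma PX_lim_pretop_obj (C : AdmCat) (X : Type)
    (conv : ((X -> Prop) -> Prop) -> X -> Prop) :
  pretop_space X conv -> pretop_obj C (powerset X) (PX_lim X conv).
Proof.
  intros [[_ hmono] hpre]; split; [split|exact hpre].
  - apply adm_powerset.
  - intros F G hF hG hFG x; exact (hmono F G x hF hG hFG).
Qed.

Section Points.
Variables (C : AdmCat) (L : Coframe) (lim : (L -> Prop) -> L).

Lemma bulletE (l : L) (psi : pt_carrier C L lim) :
  bullet C L lim l psi <-> proj1_sig psi l tt.
Proof. apply two_eq_top. Qed.

Lemma bullet_mono (a b : L) (psi : pt_carrier C L lim) :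
  cle a b -> bullet C L lim a psi -> bullet C L lim b psi.
Proof.
  intro hab; rewrite !bulletE.
  destruct psi as [phi hphi]; simpl; destruct hphi as [[hmono _] _].
  exact (hmono a b hab tt).
Qed.

(* The filter {l | psi in l^bullet} is the preimage under psi of the
   principal filter of the top of 2, on which lim_2 is top. *)
Lemma pt_conv_refl (psi : pt_carrier C L lim) :
  pt_conv C L lim (fun S => S psi) psi.
Proof.
  destruct psi as [phi hphi]; unfold pt_conv, bullet; simpl.
  destruct hphi as [_ hlim].
  apply two_eq_top, (hlim (fun A : two => A = (fun _ => True))); [|exact I].
  split; [|split].
  - exists (fun _ => True); reflexivity.
  - intros A B hAB ->; apply two_eq_top, hAB; exact I.
  - intros A B -> ->; apply two_eq_top; intros ? [-> | ->]; exact I.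
Qed.

Section InObjC.
Hypothesis hL : ObjC C L.

Lemma point_coframe_morphism (psi : pt_carrier C L lim) :
  coframe_morphism (proj1_sig psi).
Proof.
  exact (adm_coframe_mor C L two hL (adm_powerset C unit) _
           (proj1 (proj2_sig psi))).
Qed.

Lemma bullet_cinf (S : L -> Prop) (psi : pt_carrier C L lim) :
  bullet C L lim (cinf S) psi <-> forall a, S a -> bullet C L lim a psi.
Proof.
  rewrite bulletE; destruct (point_coframe_morphism psi) as [hinf _].
  rewrite hinf; split.
  - intros hS a ha; apply bulletE, hS; exists a; auto.
  - intros hS A [a [ha <-]]; apply bulletE, hS, ha.
Qed.

Lemma bullet_finf (I : Type) (f : I -> L) (psi : pt_carrier C L lim) :
  bullet C L lim (finf f) psi <-> forall i, bullet C L lim (f i) psi.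
Proof.
  unfold finf; rewrite bullet_cinf; split.
  - intros hf i; apply hf; exists i; reflexivity.
  - intros hf a [i <-]; apply hf.
Qed.

Lemma is_filter_bullet_preimage (F : powerset (pt_carrier C L lim) -> Prop) :
  is_filter F -> is_filter (fun l => F (bullet C L lim l)).
Proof.
  intros [[S hS] [hup hmeet]]; split; [|split].
  - exists ctop; apply (hup S); [|exact hS].
    intros psi _; apply bullet_cinf; intros _ [].
  - intros a b hab ha; refine (hup _ _ _ ha).
    intros psi; apply bullet_mono, hab.
  - intros a b ha hb; refine (hup _ _ _ (hmeet _ _ ha hb)).
    intros psi hpsi; apply bullet_cinf.
    intros c [-> | ->]; apply hpsi; [left|right]; reflexivity.
Qed.

End InObjC.

Lemma pt_pretop_space :
  pretop_obj C L lim -> pretop_space (pt_carrier C L lim) (pt_conv C L lim).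
Proof.
  intros [[hL hmono] hpre]; split; [split|].
  - exact pt_conv_refl.
  - intros F G psi hF hG hFG.
    apply bullet_mono, hmono; try apply is_filter_bullet_preimage; auto.
  - intros I Fs hFs; apply functional_extensionality; intro psi.
    apply propositional_extensionality; unfold PX_lim, pt_conv.
    rewrite (hpre I (fun i l => Fs i (bullet C L lim l)))
      by (intro i; apply is_filter_bullet_preimage, hFs; exact hL).
    rewrite bullet_finf, powerset_finfE by exact hL.
    reflexivity.
Qed.

End Points.

Theorem mainTheorem8 (C : AdmCat) :
  (* P maps PreTop into C^pretop and into C^pretop_cl *)
  (forall (X : Type) (conv : ((X -> Prop) -> Prop) -> X -> Prop),
     pretop_space X conv ->
     pretop_obj C (powerset X) (PX_lim X conv) /\
     classical_obj C (powerset X) (PX_lim X conv))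
  /\
  (* pt maps C^pretop (hence also C^pretop_cl) into PreTop *)
  (forall (L : Coframe) (lim : (L -> Prop) -> L),
     pretop_obj C L lim ->
     pretop_space (pt_carrier C L lim) (pt_conv C L lim))
  /\
  (forall (L : Coframe) (lim : (L -> Prop) -> L),
     pretop_obj C L lim -> classical_obj C L lim ->
     pretop_space (pt_carrier C L lim) (pt_conv C L lim)).
Proof.
  split; [|split].
  - intros X conv hX.
    pose proof (PX_lim_pretop_obj C X conv hX) as hP.
    split; [exact hP|].
    apply classical_obj_of_complemented; [apply powerset_complemented|].
    exact (proj1 hP).
  - exact (pt_pretop_space C).
  - intros L lim hL _; exact (pt_pretop_space C L lim hL).
Qed.
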